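(* Let $n\ge4$ with $n\ne 6,10$. Then $\gamma_e(P_n)\ge\lceil (n+3)/2\rceil$.
   Context: $P_n$ is the path on $n$ vertices $[x_1,\dots,x_n]$ with edges $\{x_i,x_{i+1}\}$. In a finite simple graph $\Gamma=(V,E)$ with distance $d$, a vertex $v$ carrying a non-negative integer label $\ell$ dominates (covers) exactly the vertices $u$ with $d(u,v)=\ell$; a vertex labeled $0$ dominates only itself. An extended irregular dominating set is a set $S\subseteq V$ with a labeling $\lambda:S\to\mathbb{Z}_{\ge0}$ with distinct labels on distinct vertices, such that every vertex of $V$ is dominated by some vertex of $S$; some vertex of $S$ has label $0$. $\gamma_e(\Gamma)$ denotes the minimum cardinality of an extended irregular dominating set of $\Gamma$. *)

From mathcomp Require Import all_boot.
Set Implicit Arguments. Unset Strict Implicit. Unset Printing Implicit Defensive.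

Fixpoint walk (T : finType) (e : rel T) (k : nat) (u v : T) : bool :=
  match k with
  | 0 => u == v
  | k'.+1 => [exists w, e u w && walk e k' w v]
  end.

Definition dist_eq (T : finType) (e : rel T) (u v : T) (l : nat) : bool :=
  walk e l u v && [forall m : 'I_l, ~~ walk e m u v].

Definition dominates (T : finType) (e : rel T) (lab : T -> nat) (v u : T) : bool :=
  dist_eq e v u (lab v).

Definition ext_irr_dom (T : finType) (e : rel T) (S : {set T}) (lab : T -> nat) : Prop :=
  {in S &, injective lab} /\
  (forall u : T, exists2 v, v \in S & dominates e lab v u) /\
  (exists2 v, v \in S & lab v = 0).

Definition path_rel (n : nat) : rel 'I_n :=
  fun i j => (i.+1 == j :> nat) || (j.+1 == i :> nat).

(* If |S| < (n+4)/2, counting forces the vertices of S that dominate two vertices to carry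
   exactly the labels 1, ..., h = (n-1)/2: each label j has a center c_j dominating the pair
   c_j - j, c_j + j, the centers are distinct and the 2h pair ends are distinct vertices.
   Comparing second moments about the midpoint, 2 sum_j (2c_j - (n-1))^2 + 8 sum_j j^2 cannot
   exceed sum_u (2u - (n-1))^2 = (n^3 - n)/3; since the centers are distinct this fails for odd
   n >= 5 and for even n >= 20.  The cases n = 4, 8, 12, 14, 16, 18 are ruled out by an
   exhaustive search (for n = 6, 10 such configurations exist). *)

From mathcomp Require Import all_boot zify.

Set Implicit Arguments. Unset Strict Implicit. Unset Printing Implicit Defensive.

Definition distn (a b : nat) : nat := (a - b) + (b - a).

Lemma distn_sqD a b : distn a b ^ 2 + 2 * a * b = a ^ 2 + b ^ 2.
Proof. by rewrite /distn; case: (leqP a b) => ab; nia. Qed.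

Section PathDistance.
Variable n : nat.

Lemma walk_path_distn k (u v : 'I_n) : walk (@path_rel n) k u v -> distn u v <= k.
Proof.
elim: k u => [|k IHk] u /=; first by move/eqP->; rewrite /distn subnn.
by case/existsP=> w /andP[/orP[]/eqP uw /IHk]; rewrite /distn; lia.
Qed.

Lemma path_walk_distn (u v : 'I_n) : walk (@path_rel n) (distn u v) u v.
Proof.
suff walk_k k (x : 'I_n) : distn x v = k -> walk (@path_rel n) k x v by exact: walk_k.
rewrite /distn; elim: k x => [|k IHk] x /= xv.
  by apply/eqP; apply: val_inj => /=; lia.
apply/existsP; case: (ltnP x v) => [lt_xv|le_vx].
  have lt_x1n : x.+1 < n by apply: leq_ltn_trans (ltn_ord v).
  by exists (Ordinal lt_x1n); rewrite /path_rel eqxx IHk //=; lia.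
have lt_x1n : x.-1 < n by have := ltn_ord x; lia.
exists (Ordinal lt_x1n); rewrite /path_rel IHk /= ?andbT; last by lia.
by apply/orP; right; apply/eqP; lia.
Qed.

Lemma path_dist_eqE (u v : 'I_n) l : dist_eq (@path_rel n) u v l = (l == distn u v).
Proof.
apply/andP/eqP => [[/walk_path_distn le_dl /forallP short]|->].
  apply/eqP; rewrite eqn_leq le_dl andbT leqNgt; apply/negP => lt_dl.
  by have /negP := short (Ordinal lt_dl); apply; apply: path_walk_distn.
split; first exact: path_walk_distn.
by apply/forallP => m; apply/negP => /walk_path_distn; have := ltn_ord m; lia.
Qed.

End PathDistance.

Lemma leq_sum_iota_uniq (F : nat -> nat) (s : seq nat) :
  {homo F : i j / i <= j} -> uniq s -> \sum_(0 <= i < size s) F i <= \sum_(x <- s) F x.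
Proof.
move=> F_mono; move def_k: (size s) => k; elim: k s def_k => [|k IHk] s size_s uniq_s.
  by rewrite big_geq.
have [x s_x le_kx] : exists2 x, x \in s & k <= x.
  apply/hasP; apply: contraT => /hasPn small_s.
  have /uniq_leq_size : {subset s <= iota 0 k}.
    by move=> x /small_s; rewrite mem_iota -ltnNge.
  by rewrite size_iota size_s ltnn => /(_ uniq_s).
rewrite (perm_big _ (perm_to_rem s_x)) big_cons big_nat_recr //= addnC.
by rewrite leq_add ?F_mono // IHk ?rem_uniq // size_rem // size_s.
Qed.

Lemma sum_sq l : 6 * \sum_(0 <= i < l) i ^ 2 + 3 * l ^ 2 = 2 * l ^ 3 + l.
Proof.
elim: l => [|l IHl]; first by rewrite big_geq.
by rewrite big_nat_recr //=; move: IHl; set s := \sum_(0 <= i < l) _; nia.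
Qed.

Lemma sum_distn_sq N m : 3 * \sum_(0 <= u < N) distn (2 * u) m ^ 2 + 6 * m.+1 * N ^ 2 =
  4 * N ^ 3 + 2 * N + 6 * m * N + 3 * N * m ^ 2.
Proof.
elim: N => [|N IHN]; first by rewrite big_geq; lia.
rewrite big_nat_recr //=; have := distn_sqD (2 * N) m.
by move: IHN; set s := \sum_(0 <= u < N) _; set d := distn _ _; nia.
Qed.

Lemma sum_distn_mid_sq n : 3 * \sum_(0 <= u < n) distn (2 * u) n.-1 ^ 2 + n = n ^ 3.
Proof.
case: n => [|m]; first by rewrite big_geq.
by have := sum_distn_sq m.+1 m; set s := \sum_(0 <= u < m.+1) _; nia.
Qed.

Lemma distn_sq_pair m v j : j <= v ->
  distn (2 * (v - j)) m ^ 2 + distn (2 * (v + j)) m ^ 2 = 2 * distn (2 * v) m ^ 2 + 8 * j ^ 2.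
Proof.
move=> le_jv; have := distn_sqD (2 * (v - j)) m; have := distn_sqD (2 * (v + j)) m.
have := distn_sqD (2 * v) m; rewrite -(subnK le_jv) addnK.
set a := distn _ m; set b := distn _ m; set c := distn _ m; nia.
Qed.

Section Pairing.
Variable c : nat -> nat.

Definition pair_ends l : seq nat :=
  [seq (if b then c j + j else c j - j) | j <- index_iota 1 l.+1, b <- [:: false; true]].

Definition pair_centers l : seq nat := [seq c j | j <- index_iota 1 l.+1].

Definition pairing n l : Prop :=
  [/\ forall j, 0 < j <= l -> j <= c j /\ c j + j < n,
      uniq (pair_ends l) & uniq (pair_centers l)].

Lemma pair_endsS l : pair_ends l.+1 = pair_ends l ++ [:: c l.+1 - l.+1; c l.+1 + l.+1].
Proof.
by rewrite /pair_ends /index_iota !subSS !subn0 -[l.+1]addn1 iotaD map_cat flatten_cat add1n addn1.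
Qed.

Lemma pair_centersS l : pair_centers l.+1 = rcons (pair_centers l) (c l.+1).
Proof.
by rewrite /pair_centers /index_iota !subSS !subn0 -[l.+1]addn1 iotaD map_cat -cats1 add1n addn1.
Qed.

Lemma pair_endsP l x : (forall j, 0 < j <= l -> j <= c j) ->
  reflect (exists2 j, 0 < j <= l & distn (c j) x = j) (x \in pair_ends l).
Proof.
move=> le_jc; apply: (iffP allpairsP) => [[[j b] [/= j_l _ ->]]|[j j_l dist_x]].
  rewrite mem_index_iota in j_l; exists j => //.
  by have := le_jc j j_l; rewrite /distn; case: b; lia.
exists (j, c j < x); rewrite /= mem_index_iota; split; [lia | by case: (_ < _) |].
by move: dist_x; rewrite /distn; case: ltnP; lia.
Qed.

(* Interleaves the two sides of [m / 2]: injective and below [distn (2 * x) m], so [l]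
   distinct centers have moment at least [0 ^ 2 + ... + (l - 1) ^ 2]. *)
Definition mid_rank m x := if 2 * x <= m then m - 2 * x else (2 * x - m).-1.

Lemma mid_rank_inj m : injective (mid_rank m).
Proof. by move=> x y; rewrite /mid_rank; do 2!case: ifP; lia. Qed.

Lemma mid_rank_le m x : mid_rank m x <= distn (2 * x) m.
Proof. by rewrite /mid_rank /distn; case: ifP; lia. Qed.

Lemma pairing_moment n l : pairing n l ->
  2 * \sum_(0 <= i < l) i ^ 2 + 8 * \sum_(1 <= j < l.+1) j ^ 2 <=
  \sum_(0 <= x < n) distn (2 * x) n.-1 ^ 2.
Proof.
case=> range uniq_ends uniq_centers; set w := fun x => distn (2 * x) n.-1 ^ 2.
have ends_sub : {subset pair_ends l <= index_iota 0 n}.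
  move=> _ /allpairsP[[j b] [/= j_l _ ->]]; rewrite mem_index_iota in j_l.
  by have := range j j_l; rewrite mem_iota; case: b; lia.
have ends_le : \sum_(x <- pair_ends l) w x <= \sum_(0 <= x < n) w x.
  exact: (uniq_sub_le_big leqnn (fun x y => leq_addr y x)) uniq_ends (iota_uniq _ _) ends_sub.
apply: leq_trans ends_le; rewrite big_allpairs_dep.
have -> : \sum_(1 <= j < l.+1) \sum_(b <- [:: false; true]) w (if b then c j + j else c j - j)
    = \sum_(1 <= j < l.+1) (2 * w (c j) + 8 * j ^ 2).
  rewrite big_seq_cond [RHS]big_seq_cond; apply: eq_bigr => j /andP[j_l _].
  rewrite mem_index_iota in j_l; have [le_jc _] := range j j_l.
  by rewrite !big_cons big_nil addn0 /w /= distn_sq_pair.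
rewrite big_split /= -!big_distrr /= leq_add2r leq_mul2l /=.
have uniq_ranks : uniq [seq mid_rank n.-1 x | x <- pair_centers l].
  by rewrite map_inj_uniq //; apply: mid_rank_inj.
have sq_mono : {homo (fun i => i ^ 2) : i j / i <= j} by move=> i j; rewrite leq_sqr.
have := leq_sum_iota_uniq sq_mono uniq_ranks.
rewrite size_map size_map size_iota subSS subn0 big_map big_map => /leq_trans; apply.
by apply: leq_sum => x _; rewrite leq_sqr mid_rank_le.
Qed.

Lemma pairing_half_bound n : 4 <= n -> pairing n (n.-1 %/ 2) -> ~~ odd n /\ n <= 18.
Proof.
move=> n_ge4 /pairing_moment; set l := n.-1 %/ 2.
have := sum_sq l; have := sum_distn_mid_sq n.
set q := \sum_(0 <= i < l) _; set T := \sum_(0 <= x < n) _ => sumT sumq.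
have -> : \sum_(1 <= j < l.+1) j ^ 2 = q + l ^ 2.
  by rewrite -big_nat_recr // [RHS]big_ltn.
move=> bound.
have [n_odd|n_even] : n = 2 * l + 1 \/ n = 2 * l + 2 by rewrite /l; lia.
  have l_ge2 : 2 <= l by lia.
  have : 3 * l ^ 2 < 2 * l ^ 3 + l by nia.
  by rewrite n_odd in sumT; nia.
split; first by rewrite n_even; lia.
rewrite leqNgt; apply/negP => n_gt18; have l_ge9 : 9 <= l by lia.
have : 15 * l ^ 2 + 17 * l + 6 < 2 * l ^ 3 by nia.
by rewrite n_even in sumT; nia.
Qed.

End Pairing.

(* The [if] rather than [&&] keeps [vm_compute] from evaluating pruned branches. *)
Fixpoint pairing_search (n : nat) (final : seq nat -> seq nat -> bool) (l : nat)
    (ends centers : seq nat) : bool :=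
  if l is k.+1 then
    has (fun x => if [&& l <= x, x + l < n, x \notin centers, x - l \notin ends &
                         x + l \notin ends]
                  then pairing_search n final k (x - l :: x + l :: ends) (x :: centers)
                  else false) (iota 0 n)
  else final ends centers.

Lemma pairing_searchP n (final : seq nat -> seq nat -> bool) c l ends centers :
    (forall j, 0 < j <= l -> j <= c j /\ c j + j < n) ->
    uniq (pair_ends c l ++ ends) -> uniq (pair_centers c l ++ centers) ->
    final (pair_ends c l ++ ends) (pair_centers c l ++ centers) ->
  pairing_search n final l ends centers.
Proof.
elim: l ends centers => [|l IHl] ends centers range; first by move=> _ _.
rewrite pair_endsS pair_centersS -catA -cats1 -catA /= => uniq_ends uniq_centers fin.
apply/hasP; exists (c l.+1).
  by have := range l.+1 (leqnn _); rewrite mem_iota; lia.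
have [le_lc lt_cn] := range l.+1 (leqnn _); rewrite le_lc lt_cn /= IHl //.
- move: uniq_ends uniq_centers; rewrite !cat_uniq => /and3P[_ _ /= /andP[+ /andP[-> _]]].
  by rewrite inE negb_or => /andP[_ ->] /and3P[_ _ /andP[->]].
- by move=> j /andP[j_gt0 j_le]; apply: range; rewrite j_gt0 ltnW.
Qed.

(* What remains when [n = 2 h + 2]: the two vertices outside the pairs are the label-0 vertex
   [z], which is not a center, and a vertex [u] dominated by some [w] whose label exceeds
   every pair label. *)
Definition rest_dominable n l (ends centers : seq nat) : bool :=
  has (fun z => has (fun u => has (fun w =>
      [&& z \notin centers, z \notin ends, u \notin ends, u != z, w != z & l < distn w u])
    (iota 0 n)) (iota 0 n)) (iota 0 n).

Lemma small_even_search_fails :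
  all (fun n => ~~ pairing_search n (rest_dominable n (n.-1 %/ 2)) (n.-1 %/ 2) [::] [::])
      [:: 4; 8; 12; 14; 16; 18].
Proof. by vm_compute. Qed.

Section PathDomination.
Variables (n : nat) (S : {set 'I_n}) (lab : 'I_n -> nat) (z : 'I_n).
Hypotheses (lab_inj : {in S &, injective lab}) (zS : z \in S) (lab_z : lab z = 0).
Hypothesis dominated : forall u : 'I_n, exists2 v, v \in S & lab v = distn v u.

(* [z] is made its own dominator so that it lies in no pair. *)
Definition dominator u : 'I_n :=
  if u == z then z else odflt z [pick v in S | lab v == distn v u].

Lemma dominatorP u : dominator u \in S /\ lab (dominator u) = distn (dominator u) u.
Proof.
rewrite /dominator; case: eqP => [->|_]; first by rewrite lab_z /distn subnn.
case: pickP => [v /andP[vS /eqP]|none] //=.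
by have [v vS lab_v] := dominated u; move: (none v); rewrite vS lab_v eqxx.
Qed.

Lemma dominator_z : dominator z = z.
Proof. by rewrite /dominator eqxx. Qed.

Lemma dominator_eq_z u : dominator u = z -> u = z.
Proof.
move=> dom_u; have [_] := dominatorP u; rewrite dom_u lab_z /distn => dist0.
by apply: val_inj => /=; lia.
Qed.

Definition class v := [set u | dominator u == v].

Definition doubles := [set v in S | 1 < #|class v|].

Lemma doubleP v : v \in doubles ->
  [/\ 0 < lab v, lab v <= v, v + lab v < n &
      forall u, (u \in class v) = (distn v u == lab v)].
Proof.
rewrite inE => /andP[vS /card_gt1P[u1 [u2 [class_u1 class_u2 u1_neq_u2]]]].
move: class_u1 class_u2; rewrite !inE => /eqP dom_u1 /eqP dom_u2.
have [_ lab_u1] := dominatorP u1; have [_ lab_u2] := dominatorP u2.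
rewrite dom_u1 in lab_u1; rewrite dom_u2 in lab_u2.
have val_neq : u1 <> u2 :> nat by move/ord_inj/eqP; rewrite (negPf u1_neq_u2).
have := ltn_ord u1; have := ltn_ord u2; rewrite /distn in lab_u1 lab_u2.
split; try lia; move=> u; rewrite inE; apply/eqP/eqP => [dom_u|].
  by have [_] := dominatorP u; rewrite dom_u => ->.
rewrite /distn => dist_u; have [/ord_inj->|/ord_inj->] : u = u1 :> nat \/ u = u2 :> nat by lia.
  exact: dom_u1.
exact: dom_u2.
Qed.

Lemma card_class_double v : v \in doubles -> #|class v| <= 2.
Proof.
move=> /doubleP[_ _ _ classE].
suff /leq_card_in : {in class v &, injective (fun u : 'I_n => v < u)} by rewrite card_bool.
move=> u1 u2; rewrite !classE /distn => /eqP dist_u1 /eqP dist_u2 /= side.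
by apply: ord_inj; move: side; case: ltnP; case: ltnP; lia.
Qed.

Lemma n_le_doubles_S : n <= #|doubles| + #|S|.
Proof.
have doublesS : doubles \subset S by apply/subsetP => v; rewrite inE => /andP[].
have sum_classes : \sum_(v in S) #|class v| = n.
  rewrite -[RHS]card_ord -sum1_card [RHS](partition_big dominator (mem S)) => [|u _].
    by apply: eq_bigr => v _; rewrite -sum1_card; apply: eq_bigl => u; rewrite inE.
  by case: (dominatorP u).
rewrite -[X in X <= _]sum_classes (big_setID doubles) -(cardsID doubles S) /=.
rewrite (setIidPr doublesS).
have le_doubles : \sum_(v in doubles) #|class v| <= 2 * #|doubles|.
  by rewrite mulnC -sum_nat_const; apply: leq_sum => v /card_class_double.
have le_rest : \sum_(v in S :\: doubles) #|class v| <= #|S :\: doubles|.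
  by rewrite -sum1_card; apply: leq_sum => v /setDP[vS]; rewrite inE vS -leqNgt.
by rewrite addnA addnn -mul2n leq_add.
Qed.

Lemma lab_double_range v : v \in doubles -> 0 < lab v <= n.-1 %/ 2.
Proof. by case/doubleP=> *; have := ltn_ord v; lia. Qed.

Section SmallDominatingSet.
Hypothesis small : 2 * #|S| <= n + 2.

Local Notation h := (n.-1 %/ 2).

Lemma lab_doubles_onto j : 0 < j <= h -> exists2 v, v \in doubles & lab v = j.
Proof.
move=> j_range; set labs := [seq lab v | v <- enum doubles].
have uniq_labs : uniq labs.
  rewrite map_inj_in_uniq ?enum_uniq // => u v; rewrite !mem_enum !inE.
  by move=> /andP[uS _] /andP[vS _]; apply: lab_inj.
have labs_sub : {subset labs <= index_iota 1 h.+1}.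
  by move=> x /mapP[v]; rewrite mem_enum => /lab_double_range ? ->; rewrite mem_index_iota.
have le_h : h <= #|doubles| by have := n_le_doubles_S; lia.
have [|_ labsE] := uniq_min_size uniq_labs labs_sub.
  by rewrite size_map -cardE size_iota subSS subn0.
have : j \in labs by rewrite labsE mem_index_iota.
by case/mapP=> v; rewrite mem_enum => ? ->; exists v.
Qed.

Definition center j : 'I_n := odflt z [pick v in doubles | lab v == j].

Local Notation c := (fun j => nat_of_ord (center j)).
Local Notation ends := (pair_ends c h).
Local Notation centers := (pair_centers c h).

Lemma centerP j : 0 < j <= h -> center j \in doubles /\ lab (center j) = j.
Proof.
move=> j_range; rewrite /center; case: pickP => [v /andP[? /eqP]|none] //=.
by have [v v_dbl lab_v] := lab_doubles_onto j_range; move: (none v); rewrite v_dbl lab_v eqxx.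
Qed.

Lemma center_S j : 0 < j <= h -> center j \in S.
Proof. by case/centerP; rewrite inE => /andP[]. Qed.

Lemma center_range j : 0 < j <= h -> j <= center j /\ center j + j < n.
Proof. by case/centerP=> /doubleP[_ le_lv lt_lvn _] lab_j; rewrite lab_j in le_lv lt_lvn. Qed.

Lemma center_neq_z j : 0 < j <= h -> center j != z.
Proof. by move=> j_range; apply/eqP => cz; have [_] := centerP j_range; rewrite cz lab_z; lia. Qed.

Lemma dominator_center j (u : 'I_n) :
  0 < j <= h -> distn (center j) u = j -> dominator u = center j.
Proof.
move=> j_range dist_u; have [/doubleP[_ _ _ classE] lab_j] := centerP j_range.
by apply/eqP; move: (classE u); rewrite inE => ->; rewrite dist_u lab_j.
Qed.

Lemma mem_endsP x : reflect (exists2 j, 0 < j <= h & distn (center j) x = j) (x \in ends).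
Proof. by apply: pair_endsP => j /center_range[]. Qed.

Lemma pairing_center : pairing c n h.
Proof.
have lab_center j := proj2 (centerP j).
split=> [j /center_range //||].
  apply: allpairs_uniq => [|//|[i b] [j b']]; first exact: iota_uniq.
  move=> /allpairsP[[i1 b1] [i_range _ [-> ->]]] /allpairsP[[j1 b2] [j_range _ [-> ->]]].
  rewrite /= !mem_index_iota in i_range j_range * => end_eq.
  have [le_ic lt_icn] := center_range i_range; have [le_jc lt_jcn] := center_range j_range.
  have end_lt : (if b1 then center i1 + i1 else center i1 - i1) < n by case: (b1); lia.
  have dist_i : distn (center i1) (Ordinal end_lt) = i1 by rewrite /distn /=; case: (b1); lia.
  have dist_j : distn (center j1) (Ordinal end_lt) = j1.
    by rewrite /distn /= end_eq; case: (b2); lia.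
  have ij : i1 = j1.
    rewrite -(lab_center i1 i_range) -(lab_center j1 j_range).
    by rewrite -(dominator_center i_range dist_i) (dominator_center j_range dist_j).
  rewrite -ij in end_eq *; congr pair.
  by move: end_eq; case: (b1); case: (b2) => // ?; exfalso; lia.
rewrite map_inj_in_uniq ?iota_uniq // => i j; rewrite !mem_index_iota => i_range j_range.
by move/ord_inj => cij; rewrite -(lab_center i i_range) -(lab_center j j_range) cij.
Qed.

Lemma z_notin_centers : val z \notin centers.
Proof.
apply/mapP=> [[j j_range /ord_inj z_center]]; rewrite mem_index_iota in j_range.
by have := center_neq_z j_range; rewrite -z_center eqxx.
Qed.

Lemma z_notin_ends : val z \notin ends.
Proof.
apply/mem_endsP=> [[j j_range /(dominator_center j_range)]].
by rewrite dominator_z => z_center; have := center_neq_z j_range; rewrite -z_center eqxx.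
Qed.

Lemma exists_free_vertex : ~~ odd n -> exists2 u : 'I_n, u != z & val u \notin ends.
Proof.
move=> n_even.
case: (pickP [pred u : 'I_n | (u != z) && (val u \notin ends)]) => [u /andP[]|none].
  by exists u.
have uniq_rest : uniq [seq val u | u <- enum [set~ z]].
  by rewrite (map_inj_uniq val_inj) enum_uniq.
have /(uniq_leq_size uniq_rest) : {subset [seq val u | u <- enum [set~ z]] <= ends}.
  move=> x /mapP[u]; rewrite mem_enum !inE => u_neq_z ->.
  by move: (none u); rewrite /= u_neq_z /= => /negbFE.
rewrite size_map -cardE cardsC1 card_ord size_allpairs size_iota /= => too_small.
by have := ltn_ord z; lia.
Qed.

Lemma far_dominator (u : 'I_n) : u != z -> val u \notin ends -> h < distn (dominator u) u.
Proof.
move=> u_neq_z u_free; have [dom_u_S lab_dom_u] := dominatorP u; rewrite -lab_dom_u.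
rewrite ltnNge; apply/negP => lab_le; move/negP: u_free; apply.
have lab_pos : 0 < lab (dominator u).
  rewrite lt0n; apply/eqP => lab0; rewrite -lab_z in lab0.
  by move: u_neq_z; rewrite -(dominator_eq_z (lab_inj dom_u_S zS lab0)) eqxx.
have j_range : 0 < lab (dominator u) <= h by rewrite lab_pos.
have center_dom : center (lab (dominator u)) = dominator u.
  by apply: lab_inj; rewrite ?center_S ?(proj2 (centerP j_range)).
by apply/mem_endsP; exists (lab (dominator u)); rewrite // center_dom lab_dom_u.
Qed.

Lemma rest_dominable_center : ~~ odd n -> rest_dominable n h ends centers.
Proof.
move=> /exists_free_vertex[u u_neq_z u_free].
apply/hasP; exists (val z); first by rewrite mem_iota /=.
apply/hasP; exists (val u); first by rewrite mem_iota /=.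
apply/hasP; exists (val (dominator u)); first by rewrite mem_iota /=.
rewrite z_notin_centers z_notin_ends u_free !(inj_eq val_inj) u_neq_z far_dominator // andbT.
by apply/eqP => /dominator_eq_z uz; rewrite uz eqxx in u_neq_z.
Qed.

End SmallDominatingSet.
End PathDomination.

Theorem corollary5p8 (n : nat) (S : {set 'I_n}) (lab : 'I_n -> nat) :
  4 <= n -> n != 6 -> n != 10 ->
  ext_irr_dom (@path_rel n) S lab ->
  (n + 4) %/ 2 <= #|S|.
Proof.
move=> n_ge4 n_neq6 n_neq10 [lab_inj [cover [z zS lab_z]]].
rewrite leqNgt; apply/negP => S_small; have small : 2 * #|S| <= n + 2 by lia.
have dominated (u : 'I_n) : exists2 v, v \in S & lab v = distn v u.
  by have [v vS] := cover u; rewrite /dominates path_dist_eqE => /eqP; exists v.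
have centers := pairing_center lab_inj zS lab_z dominated small.
have [n_even n_le18] := pairing_half_bound n_ge4 centers.
have n_cases : n \in [:: 4; 8; 12; 14; 16; 18] by rewrite !inE; lia.
have /allP/(_ n n_cases)/negP := small_even_search_fails; apply.
case: centers => range uniq_ends uniq_centers.
by apply: (pairing_searchP range); rewrite ?cats0 // rest_dominable_center.
Qed.
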